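(* Let $G=(V,E)$ be a connected undirected unweighted graph in which every node has a self-loop, let $S\subseteq V$, and let $X\subseteq V$ be a configuration with $X\cap S\neq\emptyset$. Then $\operatorname{fp}^{\infty}(G^S,X)=1$.
   Context: Positional Voter model. A graph $G=(V,E,w)$ has node set $V$ with $|V|=n$, edge set $E\subseteq V\times V$ and weights $w\colon E\to\mathbb{R}_{>0}$; $\operatorname{in}(u)=\{v\in V:(v,u)\in E\}$. ''Undirected unweighted'' means $E$ is symmetric and $w\equiv 1$; ''self-loop at $u$'' means $(u,u)\in E$. A configuration is a set $X\subseteq V$ (the nodes carrying the novel trait $A$). Given a biased set $S\subseteq V$ and bias $\delta\ge 0$, define $f^S_X(v\mid u)=1+\delta$ if $v\in X$ and $u\in S$, and $1$ otherwise. The process $(\mathcal{X}_t)_{t\ge0}$: given $\mathcal{X}_t=X$, a node $u$ is chosen uniformly at random from $V$, then $v\in\operatorname{in}(u)$ is chosen with probability $\frac{f^S_X(v\mid u)\,w(v,u)}{\sum_{x\in\operatorname{in}(u)} f^S_X(x\mid u)\,w(x,u)}$, and $\mathcal{X}_{t+1}=X\cup\{u\}$ if $v\in X$, $\mathcal{X}_{t+1}=X\setminus\{u\}$ otherwise. Define $\operatorname{fp}(G^S,\delta,X)=\mathbb{P}[\exists t\ge0:\mathcal{X}_t=V\mid\mathcal{X}_0=X]$ and $\operatorname{fp}^{\infty}(G^S,X)=\lim_{\delta\to\infty}\operatorname{fp}(G^S,\delta,X)$. *)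

From HB Require Import structures.
From mathcomp Require Import all_boot all_order all_algebra.
From mathcomp Require Import all_classical all_reals all_analysis.
Set Implicit Arguments. Unset Strict Implicit. Unset Printing Implicit Defensive.
Import Order.TTheory GRing.Theory Num.Theory numFieldNormedType.Exports.
Local Open Scope ring_scope.

Section PositionalVoter.
Variables (R : realType) (T : finType).
(* e v u  <->  (v,u) \in E ;  in(u) = [set v | e v u] ;  w = edge weights *)
Variables (e : rel T) (w : T -> T -> R) (S : {set T}) (delta : R).

Definition bias (X : {set T}) (v u : T) : R :=
  if (v \in X) && (u \in S) then 1 + delta else 1.

Definition norm_in (X : {set T}) (u : T) : R :=
  \sum_(x | e x u) bias X x u * w x u.

(* configuration after u copies the trait of v *)
Definition update (X : {set T}) (u v : T) : {set T} :=
  if v \in X then u |: X else X :\ u.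

Definition trans (X Y : {set T}) : R :=
  \sum_u \sum_(v | e v u)
     (#|T|%:R)^-1 * (bias X v u * w v u / norm_in X u)
       * (update X u v == Y)%:R.

Fixpoint hit_within (t : nat) (X : {set T}) : R :=
  match t with
  | 0 => (X == [set: T]%SET)%:R
  | t'.+1 => if X == [set: T]%SET then 1 else \sum_Y trans X Y * hit_within t' Y
  end.

(* fp(G^S, delta, X) = P[exists t, X_t = V | X_0 = X]
   = lim_t P[X hits V within t steps] (continuity of measure) *)
Definition fp (X : {set T}) : R := limn (fun t => hit_within t X).

End PositionalVoter.

Definition undirected_selfloop_connected (T : finType) (e : rel T) : Prop :=
  symmetric e /\ (forall u, e u u) /\ (forall u v, connect e u v).

From Pilot Require Import Defs.
From HB Require Import structures.
From mathcomp Require Import all_boot all_order all_algebra.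
From mathcomp Require Import all_classical all_reals all_analysis.
From mathcomp Require Import lra.
Import Order.TTheory GRing.Theory Num.Theory numFieldNormedType.Exports.
Set Implicit Arguments. Unset Strict Implicit. Unset Printing Implicit Defensive.
Local Open Scope ring_scope.

(* Call a configuration good when it meets S.  A biased node u in S :&: X
   weighs each trait carrier in in(u) by 1 + delta, so it copies a
   non-carrier with probability at most 1 / (1 + delta): a good configuration
   becomes bad with probability O(1 / delta) per step.  On the other hand,
   connectivity gives an edge from X to its complement whenever X is not V,
   and the trait spreads along it with probability at least 1 / n^2 whatever
   delta is; so a round of n steps reaches V with probability at least
   q = n^(-2n).  After k rounds the chain has fixed with probability at least
   1 - (1 - q)^k - k n^3 / (1 + delta), which tends to 1 when delta and then
   k go to infinity. *)

Lemma connect_exit_edge (T : finType) (e : rel T) (X : {set T}) x y :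
  connect e x y -> x \in X -> y \notin X ->
  exists u v, [/\ v \in X, u \notin X & e v u].
Proof.
case/connectP => p + ->; elim: p x => [|z p IHp] x /=; first by move=> _ ->.
case/andP=> exz ezp xX; case: (boolP (z \in X)) => zX; first exact: IHp.
by exists z, x.
Qed.

Lemma card_gt0_of_neq_setT (T : finType) (X : {set T}) : X != [set: T] -> (0 < #|T|)%N.
Proof. by rewrite -properT => /proper_card; rewrite cardsT; apply: leq_ltn_trans. Qed.

Lemma inv_card_expr_gt0_le1 (R : numFieldType) (T : finType) (x : T) m :
  0 < ((#|T|%:R : R) ^+ m)^-1 <= 1.
Proof.
have N_ge1 : 1 <= (#|T|%:R : R) by rewrite ler1n; apply/card_gt0P; exists x.
have N_gt0 := lt_le_trans ltr01 N_ge1.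
by rewrite invr_gt0 exprn_gt0 //= invf_le1 ?exprn_ege1 ?exprn_gt0.
Qed.

Lemma ler_sum_rel_term (R : numDomainType) (I : finType) (r : rel I)
    (F G : I -> I -> R) i0 j0 :
  (forall i j, r j i -> G i j <= F i j) -> r j0 i0 ->
  \sum_i \sum_(j | r j i) G i j + (F i0 j0 - G i0 j0) <=
  \sum_i \sum_(j | r j i) F i j.
Proof.
move=> GleF rji0; rewrite addrC -lerBrDr -sumrB.
under eq_bigr do rewrite -sumrB.
rewrite (bigD1 i0) //= (bigD1 j0) //= -addrA lerDl.
rewrite addr_ge0 ?sumr_ge0 // => [j /andP[rj _]|i _]; last rewrite sumr_ge0 // => j rj.
all: by rewrite subr_ge0 GleF.
Qed.

Section VoterChain.
Variables (R : realType) (T : finType) (e : rel T) (w : T -> T -> R).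
Variables (S : {set T}) (delta : R).
Hypothesis e_refl : forall u, e u u.
Hypothesis w_gt0 : forall u v, 0 < w u v.
Hypothesis delta_ge0 : 0 <= delta.

Local Notation bias := (bias S delta).
Local Notation norm_in := (norm_in e w S delta).
Local Notation hit t X := (hit_within e w S delta t X).

Definition step_coef X u v : R :=
  #|T|%:R^-1 * (bias X v u * w v u / norm_in X u).

Lemma bias_ge1 X v u : 1 <= bias X v u.
Proof. by rewrite /Defs.bias; case: ifP => _; rewrite ?lerDl. Qed.

Lemma bias_gt0 X v u : 0 < bias X v u.
Proof. exact: lt_le_trans ltr01 (bias_ge1 X v u). Qed.

Lemma bias_le_infected (X : {set T}) x v u : v \in X -> bias X x u <= bias X v u.
Proof. by rewrite /Defs.bias => ->; case: (_ \in _) (_ \in S) => -[]; rewrite ?lerDl. Qed.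

Lemma norm_in_ge_self X u : bias X u u * w u u <= norm_in X u.
Proof.
rewrite /Defs.norm_in (bigD1 u) //= lerDl; apply: sumr_ge0 => x _.
by rewrite mulr_ge0 ?ltW ?bias_gt0.
Qed.

Lemma norm_in_gt0 X u : 0 < norm_in X u.
Proof.
exact: lt_le_trans (mulr_gt0 (bias_gt0 _ _ _) (w_gt0 _ _)) (norm_in_ge_self X u).
Qed.

Lemma step_coef_ge0 X u v : 0 <= step_coef X u v.
Proof.
by rewrite /step_coef !mulr_ge0 ?invr_ge0 ?ler0n ?ltW ?bias_gt0 ?norm_in_gt0.
Qed.

Lemma sum_step_coef X : (0 < #|T|)%N ->
  \sum_u \sum_(v | e v u) step_coef X u v = 1.
Proof.
move=> T_gt0; under eq_bigr => u _.
  rewrite -mulr_sumr -mulr_suml divff ?mulr1 ?gt_eqF ?norm_in_gt0 //.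
  over.
by rewrite sumr_const -(mulr_natr (#|T|%:R^-1)) mulVf // pnatr_eq0 -lt0n.
Qed.

Lemma sum_trans_mul X (F : {set T} -> R) :
  \sum_Y trans e w S delta X Y * F Y =
  \sum_u \sum_(v | e v u) step_coef X u v * F (update X u v).
Proof.
rewrite /trans; under eq_bigr do rewrite mulr_suml.
rewrite exchange_big; apply: eq_bigr => u _.
under eq_bigr do rewrite mulr_suml.
rewrite exchange_big; apply: eq_bigr => v _.
rewrite (bigD1 (update X u v)) //= eqxx mulr1 big1 ?addr0 // => Y /negbTE nY.
by rewrite eq_sym nY mulr0 mul0r.
Qed.

Lemma hit_within_setT t : hit t [set: T] = 1.
Proof. by case: t => [|t] /=; rewrite eqxx. Qed.

Lemma hit_withinS t X : X != [set: T] ->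
  hit t.+1 X = \sum_u \sum_(v | e v u) step_coef X u v * hit t (update X u v).
Proof. by move=> /negbTE XnT; rewrite /= XnT sum_trans_mul. Qed.

Lemma hit_within_ge0 t X : 0 <= hit t X.
Proof.
elim: t X => [|t IHt] X /=; first by case: (_ == _).
case: ifP => // _; rewrite sum_trans_mul.
by do 2![apply: sumr_ge0 => ? _]; rewrite mulr_ge0 ?step_coef_ge0.
Qed.

Lemma hit_within_le1 t X : hit t X <= 1.
Proof.
elim: t X => [|t IHt] X /=; first by case: (_ == _); rewrite ?ler01.
case: ifPn => // XnT; rewrite sum_trans_mul.
rewrite -(sum_step_coef X (card_gt0_of_neq_setT XnT)).
by do 2![apply: ler_sum => ? _]; rewrite ler_piMr ?step_coef_ge0.
Qed.

Lemma hit_within_leS t X : hit t X <= hit t.+1 X.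
Proof.
elim: t X => [|t IHt] X.
  by have := hit_within_ge0 1 X; rewrite /=; case: ifP.
rewrite [hit t.+1 X]/= [hit t.+2 X]/=; case: ifP => // _; rewrite !sum_trans_mul.
by do 2![apply: ler_sum => ? _]; rewrite ler_wpM2l ?step_coef_ge0.
Qed.

Lemma hit_within_le s t X : (s <= t)%N -> hit s X <= hit t X.
Proof.
move=> /subnKC <-; elim: (t - s)%N => [|k IHk]; rewrite ?addn0 // addnS.
exact: le_trans IHk (hit_within_leS _ _).
Qed.

Lemma hit_within_cvgn X : cvgn (fun t => hit t X).
Proof.
apply: nondecreasing_is_cvgn; first by move=> n m; apply: hit_within_le.
by exists 1 => _ [s _ <-]; apply: hit_within_le1.
Qed.

Lemma hit_within_le_fp t X : hit t X <= fp e w S delta X.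
Proof.
have hit_nd : nondecreasing_seq (fun t => hit t X) by move=> n m; apply: hit_within_le.
exact: nondecreasing_cvgn_le hit_nd (hit_within_cvgn (X := X)) t.
Qed.

Lemma fp_le1 X : fp e w S delta X <= 1.
Proof.
by apply: limr_le (hit_within_cvgn (X := X)) _; apply: nearW => t; apply: hit_within_le1.
Qed.

End VoterChain.

Definition biased_loss (T : finType) (S X : {set T}) u v :=
  [&& u \in S, u \in X & v \notin X].

Lemma update_meets (T : finType) (S X : {set T}) u v :
  ~~ [disjoint X & S] -> ~~ biased_loss S X u v -> ~~ [disjoint update X u v & S].
Proof.
rewrite -!setI_eq0 => /set0Pn[x /setIP[xX xS]] no_loss; apply/set0Pn; exists x.
rewrite /update; case: ifP => vX; rewrite !inE ?xX ?xS ?orbT //= !andbT.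
by apply: contraNneq no_loss => xu; rewrite /biased_loss -xu xS xX vX.
Qed.

Section Unweighted.
Variables (R : realType) (T : finType) (e : rel T) (S : {set T}) (delta : R).
Hypothesis e_refl : forall u, e u u.
Hypothesis e_connected : forall u v, connect e u v.
Hypothesis delta_ge0 : 0 <= delta.

Local Notation one := (fun _ _ : T => 1 : R).
Local Notation coef := (step_coef e one S delta).
Local Notation hit t X := (hit_within e one S delta t X).
Local Notation N := (#|T|%:R : R).
Local Notation loss_bound := (N ^+ 2 / (1 + delta)).

Lemma one_gt0 : forall u v : T, 0 < one u v.
Proof. by move=> *; apply: ltr01. Qed.

Let coef_ge0 := step_coef_ge0 S e_refl one_gt0 delta_ge0.
Let norm_gt0 := norm_in_gt0 S e_refl one_gt0 delta_ge0.
Let hit_ge0 := hit_within_ge0 S e_refl one_gt0 delta_ge0.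
Let sum_coef := sum_step_coef S e_refl one_gt0 delta_ge0.
Let hit_le := hit_within_le S e_refl one_gt0 delta_ge0.

Lemma step_coef_ge_infected (X : {set T}) u v : v \in X -> N^-2 <= coef X u v.
Proof.
move=> vX; have N_gt0 : 0 < N by rewrite ltr0n; apply/card_gt0P; exists v.
have norm_le : norm_in e one S delta X u <= N * bias S delta X v u.
  apply: le_trans (_ : _ <= \sum_(x : T) bias S delta X v u) _.
    rewrite [leRHS](bigID (fun x => e x u)) /=; apply: ler_wpDr.
      by apply: sumr_ge0 => x _; apply: ltW (bias_gt0 S delta_ge0 _ _ _).
    by apply: ler_sum => x _; rewrite mulr1 bias_le_infected.
  by rewrite sumr_const mulr_natl.
rewrite /step_coef expr2 invfM ler_wpM2l ?invr_ge0 ?ler0n // mulr1.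
by rewrite ler_pdivlMr ?norm_gt0 // ler_pdivrMl.
Qed.

Lemma step_coef_biased_loss_le (X : {set T}) u v :
  biased_loss S X u v -> coef X u v <= (1 + delta)^-1.
Proof.
case/and3P=> uS uX vX.
have norm_ge : 1 + delta <= norm_in e one S delta X u.
  have := norm_in_ge_self S e_refl one_gt0 delta_ge0 X u.
  by rewrite /Defs.bias uX uS mulr1.
have delta1_gt0 : 0 < 1 + delta by rewrite ltr_wpDr.
rewrite /step_coef /Defs.bias (negbTE vX) !mul1r -[leRHS]mul1r.
apply: ler_pM; rewrite ?invr_ge0 ?ler0n ?(ltW (norm_gt0 _ _)) //.
  have T_gt0 : (0 < #|T|)%N by apply/card_gt0P; exists u.
  by rewrite invf_le1 ?ltr0n // ler1n.
by rewrite lef_pV2 ?posrE ?norm_gt0.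
Qed.

Lemma sum_biased_loss_le (X : {set T}) :
  \sum_u \sum_(v | e v u) coef X u v * (biased_loss S X u v)%:R <= loss_bound.
Proof.
apply: le_trans (_ : _ <= \sum_(u : T) \sum_(v : T) (1 + delta)^-1) _.
  apply: ler_sum => u _; rewrite [leRHS](bigID (fun v => e v u)) /=.
  apply: ler_wpDr; first by rewrite sumr_ge0 // => *; rewrite invr_ge0 addr_ge0.
  apply: ler_sum => v _.
  case: (boolP (biased_loss S X u v)) => [/step_coef_biased_loss_le|_].
    by rewrite mulr1.
  by rewrite mulr0 invr_ge0 addr_ge0.
by rewrite !sumr_const -mulrnA expr2 -natrM mulr_natl.
Qed.

Lemma hit_within_step_ge c t (X : {set T}) u0 v0 :
  c <= 1 -> (forall Y : {set T}, ~~ [disjoint Y & S] -> c <= hit t Y) ->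
  ~~ [disjoint X & S] -> X != [set: T] -> v0 \in X -> u0 \notin X -> e v0 u0 ->
  c + N^-2 * (hit t (u0 |: X) - c) - loss_bound <= hit t.+1 X.
Proof.
move=> c_le1 c_le_hit XS XnT v0X u0X ev0u0; rewrite hit_withinS //.
pose F u v := coef X u v * hit t (update X u v).
pose G u v := coef X u v * (c - (biased_loss S X u v)%:R).
have GleF u v : e v u -> G u v <= F u v.
  move=> _; rewrite ler_wpM2l ?coef_ge0 //.
  have [loss|no_loss] := boolP (biased_loss S X u v).
    by apply: le_trans (hit_ge0 t _); rewrite subr_le0.
  by rewrite subr0 c_le_hit ?update_meets.
have sumG : \sum_u \sum_(v | e v u) G u v =
    c - \sum_u \sum_(v | e v u) coef X u v * (biased_loss S X u v)%:R.
  transitivity ((\sum_u \sum_(v | e v u) coef X u v) * c -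
      \sum_u \sum_(v | e v u) coef X u v * (biased_loss S X u v)%:R).
    rewrite mulr_suml -sumrB; apply: eq_bigr => u _.
    by rewrite mulr_suml -sumrB; apply: eq_bigr => v _; rewrite /G mulrBr.
  by rewrite sum_coef ?mul1r // (card_gt0_of_neq_setT XnT).
have FG0 : F u0 v0 - G u0 v0 = coef X u0 v0 * (hit t (u0 |: X) - c).
  by rewrite /F /G /update /biased_loss v0X !andbF subr0 -mulrBr.
have c_le_hit0 : 0 <= hit t (u0 |: X) - c.
  rewrite subr_ge0; apply: c_le_hit.
  by apply: contraNN XS; apply: disjointWl; apply: subsetU1.
have infected := step_coef_ge_infected u0 v0X.
have := ler_sum_rel_term GleF ev0u0; rewrite sumG FG0.
have := sum_biased_loss_le X.
have := ler_wpM2r c_le_hit0 infected.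
lra.
Qed.

(* With probability at least N^-2 ^+ j the next j steps all spread the trait;
   otherwise we fall back on the bound c, losing loss_bound per step. *)
Lemma hit_within_block_ge c t : c <= 1 ->
  (forall Y : {set T}, ~~ [disjoint Y & S] -> c <= hit t Y) ->
  forall j (X : {set T}), ~~ [disjoint X & S] -> (#|~: X| <= j)%N ->
  N^-2 ^+ j + (1 - N^-2 ^+ j) * c - j%:R * loss_bound <= hit (t + j) X.
Proof.
move=> c_le1 c_le_hit; elim=> [|j IHj] X XS XC.
  have -> : X = [set: T].
    move: XC; rewrite leqn0 cards_eq0 => /eqP XC0.
    by rewrite -(finset.setCK X) XC0 finset.setC0.
  by rewrite hit_within_setT expr0 subrr !mul0r addr0 subr0.
have := XS; rewrite -setI_eq0 => /set0Pn[x /setIP[xX xS]].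
have /andP[/ltW p_ge0 p_le1] := inv_card_expr_gt0_le1 R x 2.
have loss_ge0 : 0 <= loss_bound by rewrite divr_ge0 ?exprn_ge0 ?addr_ge0.
have pj_ge0 : 0 <= N^-2 ^+ j by rewrite exprn_ge0.
have pj_le1 : N^-2 ^+ j <= 1 by rewrite exprn_ile1.
rewrite addnS exprS -natr1.
have [->|XnT] := eqVneq X [set: T].
  rewrite hit_within_setT.
  have : 0 <= (1 - N^-2 * N^-2 ^+ j) * (1 - c) by rewrite mulr_ge0 ?subr_ge0 ?mulr_ile1.
  have : 0 <= (j%:R + 1) * loss_bound by rewrite mulr_ge0 ?addr_ge0.
  nra.
have /subsetPn[y _ yX] : ~~ ([set: T] \subset X) by rewrite finset.subTset.
have [u0 [v0 [v0X u0X ev0u0]]] := connect_exit_edge (e_connected x y) xX yX.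
have XS' : ~~ [disjoint u0 |: X & S].
  by apply: contraNN XS; apply: disjointWl; apply: subsetU1.
have XC' : (#|~: (u0 |: X)| <= j)%N.
  move: XC; rewrite finset.setCU finset.setIC -finset.setDE.
  by rewrite (cardsD1 u0 (~: X)) inE u0X.
have c_le_hit' (Y : {set T}) : ~~ [disjoint Y & S] -> c <= hit (t + j) Y.
  by move=> YS; apply: le_trans (c_le_hit _ YS) (hit_le Y (leq_addr j t)).
have step := hit_within_step_ge c_le1 c_le_hit' XS XnT v0X u0X ev0u0.
have IH := IHj _ XS' XC'.
have : 0 <= N^-2 * (hit (t + j) (u0 |: X) -
    (N^-2 ^+ j + (1 - N^-2 ^+ j) * c - j%:R * loss_bound)).
  by rewrite mulr_ge0 ?subr_ge0.
have : 0 <= (1 - N^-2) * (j%:R * loss_bound) by rewrite mulr_ge0 ?subr_ge0 // mulr_ge0.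
nra.
Qed.

Lemma hit_within_rounds_ge k (X : {set T}) : ~~ [disjoint X & S] ->
  1 - (1 - N^-2 ^+ #|T|) ^+ k - k%:R * (N * loss_bound) <= hit (k * #|T|) X.
Proof.
move=> XS; have := XS; rewrite -setI_eq0 => /set0Pn[x _].
have /andP[/ltW p_ge0 p_le1] := inv_card_expr_gt0_le1 R x 2.
have q_ge0 : 0 <= N^-2 ^+ #|T| by rewrite exprn_ge0.
have q_le1 : N^-2 ^+ #|T| <= 1 by rewrite exprn_ile1.
have loss_ge0 : 0 <= N * loss_bound by rewrite mulr_ge0 ?divr_ge0 ?exprn_ge0 ?addr_ge0.
elim: k X XS => [|k IHk] X XS; first by rewrite expr0 subrr mul0r subr0 hit_ge0.
have c_le1 : 1 - (1 - N^-2 ^+ #|T|) ^+ k - k%:R * (N * loss_bound) <= 1.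
  have : 0 <= (1 - N^-2 ^+ #|T|) ^+ k by rewrite exprn_ge0 // subr_ge0.
  have : 0 <= k%:R * (N * loss_bound) by rewrite mulr_ge0.
  lra.
have := hit_within_block_ge c_le1 IHk XS (max_card (~: X)); rewrite -mulSnr.
have : 0 <= N^-2 ^+ #|T| * (k%:R * (N * loss_bound)) by rewrite mulr_ge0 // mulr_ge0.
rewrite [(1 - _) ^+ k.+1]exprS -natr1; nra.
Qed.

End Unweighted.

Local Open Scope classical_set_scope.

Lemma cvg_to1_of_lower_bounds (R : realType) (f : R -> R) (a b : nat -> R) :
  (forall d, 0 <= d -> f d <= 1) -> a @ \oo --> 0 ->
  (forall k d, 0 <= d -> 1 - a k - b k / (1 + d) <= f d) ->
  f x @[x --> +oo] --> (1 : R).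
Proof.
move=> f_le1 a_to0 f_ge; apply/cvgrPdist_lt => eta eta_gt0.
have eta2_gt0 : 0 < eta / 2 by rewrite divr_gt0.
have [k ak_lt] := filter_ex (cvgr0_norm_lt _ a_to0 _ eta2_gt0).
near=> d.
have d_ge0 : 0 <= d by near: d; apply: nbhs_pinfty_ge.
have bk_lt : `|b k| / (1 + d) < eta / 2.
  rewrite ltr_pdivrMr ?ltr_wpDr //; near: d.
  apply: filterS (nbhs_pinfty_gt (num_real (2 * `|b k| / eta))) => d.
  rewrite ltr_pdivrMr // => bk_lt; have : 0 <= eta * 2^-1 by rewrite ltW.
  nra.
have bk_le : b k / (1 + d) <= `|b k| / (1 + d).
  by rewrite ler_wpM2r ?invr_ge0 ?addr_ge0 ?ler_norm.
rewrite ger0_norm ?subr_ge0 ?f_le1 //.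
have := f_ge k d d_ge0; have := ler_norm (a k); lra.
Unshelve. all: by end_near.
Qed.

Theorem mainTheorem3 (R : realType) (T : finType) (e : rel T)
    (S X : {set T}) :
  undirected_selfloop_connected e ->
  (X :&: S)%SET != @finset.set0 T ->
  fp e (fun _ _ => 1) S delta X @[delta --> +oo] --> (1 : R).
Proof.
case=> _ [e_refl e_connected]; rewrite setI_eq0 => XS.
have := XS; rewrite -setI_eq0 => /set0Pn[x _].
have /andP[p_gt0 p_le1] := inv_card_expr_gt0_le1 R x 2.
pose q := (#|T|%:R ^+ 2)^-1 ^+ #|T| : R.
have q_gt0 : 0 < q by rewrite exprn_gt0.
have q_le1 : q <= 1 by rewrite exprn_ile1 // ltW.
apply: (@cvg_to1_of_lower_bounds _ _ (fun k => (1 - q) ^+ k)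
    (fun k => k%:R * (#|T|%:R * #|T|%:R ^+ 2))).
- by move=> d d_ge0; apply: (fp_le1 S e_refl (@one_gt0 R T) d_ge0).
- by apply: cvg_expr; rewrite ger0_norm ?subr_ge0 // ltrBlDl ltrDr.
move=> k d d_ge0.
apply: le_trans (hit_within_le_fp S e_refl (@one_gt0 R T) d_ge0 (k * #|T|) X).
by rewrite -mulrA -[_ * _ / _]mulrA; apply: hit_within_rounds_ge.
Qed.
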